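(* Let $K$ be a compact Hausdorff scattered space of finite height and let $K^{(n)}$ denote its $n$-th Cantor--Bendixson derivative (with $K^{(0)}=K$). If for every $n$ the set $K^{(n+1)}$ admits an extension operator in $K^{(n)}$, then $K$ has the extension property.
   Context: $K^{(n+1)}$ is the set of non-isolated points of $K^{(n)}$; finite height means $K^{(n)}=\emptyset$ for some finite $n$. $C(K)$ is the Banach space of real-valued continuous functions on $K$ with the supremum norm. For compact $A$ and closed $F\subseteq A$, an extension operator for $F$ in $A$ is a bounded linear map $E:C(F)\to C(A)$ with $E(f)|_F=f$ for all $f\in C(F)$. A compact space has the extension property if every nonempty closed subset admits an extension operator in it. *)

From mathcomp Require Import all_boot all_order all_algebra.
From mathcomp Require Import all_classical all_reals all_analysis.
Set Implicit Arguments. Unset Strict Implicit. Unset Printing Implicit Defensive.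
Import Order.TTheory GRing.Theory Num.Theory.
Import numFieldNormedType.Exports.
Local Open Scope classical_set_scope.
Local Open Scope ring_scope.

Definition isolated_in {T : topologicalType} (S : set T) (x : T) : Prop :=
  S x /\ exists U : set T, open U /\ U `&` S = [set x].

Fixpoint CB_deriv {T : topologicalType} (n : nat) : set T :=
  match n with
  | O => setT
  | S m => [set x | CB_deriv m x /\ ~ isolated_in (CB_deriv m) x]
  end.

Definition scattered (T : topologicalType) : Prop :=
  forall S : set T, S !=set0 -> exists x, isolated_in S x.

Definition finite_height (T : topologicalType) : Prop :=
  exists n : nat, @CB_deriv T n = set0.

Definition cont_on {R : realType} {T : topologicalType} (F : set T) (f : T -> R) : Prop :=
  {within F, continuous f}.

(* An extension operator for F in A, E : C(F) -> C(A).  Elements of C(F) are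
   represented by functions T -> R continuous on F (only their values on F
   matter); elements of C(A) by functions continuous on A (only their values on
   A matter). *)
Definition extension_operator {R : realType} {T : topologicalType}
    (F A : set T) (E : (T -> R) -> (T -> R)) : Prop :=
  [/\ (forall f g : T -> R, cont_on F f -> cont_on F g ->
         (forall y, F y -> f y = g y) -> forall x, A x -> E f x = E g x),
      (forall f : T -> R, cont_on F f -> cont_on A (E f)),
      (forall (a : R) (f g : T -> R),
         cont_on F f -> cont_on F g ->
         forall x, A x -> E (fun y => a * f y + g y) x = a * E f x + E g x),
      (exists M : R, forall f : T -> R, cont_on F f ->
         forall c : R, 0 <= c -> (forall y, F y -> `|f y| <= c) ->
         forall x, A x -> `|E f x| <= M * c)
    & (forall f : T -> R, cont_on F f -> forall x, F x -> E f x = f x)].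

Definition has_extension_operator (R : realType) {T : topologicalType}
    (F A : set T) : Prop :=
  exists E : (T -> R) -> (T -> R), extension_operator F A E.

Definition extension_property (R : realType) (T : topologicalType) : Prop :=
  forall F : set T, closed F -> F !=set0 -> has_extension_operator R F setT.

From mathcomp Require Import all_boot all_order all_algebra.
From mathcomp Require Import all_classical all_reals all_analysis.
Set Implicit Arguments. Unset Strict Implicit. Unset Printing Implicit Defensive.
Import Order.TTheory GRing.Theory Num.Theory.
Import numFieldNormedType.Exports.
Local Open Scope classical_set_scope.
Local Open Scope ring_scope.

(* Fix a closed F.  An operator C(F ∪ K^(n+1)) -> C(F ∪ K^(n)) is obtained by
   keeping g on F ∪ K^(n+1) and using the given extension of g|K^(n+1) on the
   rest: those points are isolated in K^(n) and lie outside the closed set F,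
   so the glued function stays continuous.  Composing these operators from
   the height h (where K^(h) is empty) down to n = 0 extends from F to K. *)

Section CantorBendixson.
Variable T : topologicalType.

Lemma near_notin_closed (A : set T) (x : T) :
  closed A -> ~ A x -> \forall y \near x, ~ A y.
Proof. by move=> cA nAx; apply: open_nbhs_nbhs; split => //; exact: closed_openC. Qed.

Lemma near_isolated_in (A : set T) (x : T) :
  isolated_in A x -> \forall y \near x, A y -> y = x.
Proof.
case=> _ [U [oU UA]]; have Ux : U x by have : [set x] x by []; rewrite -UA => -[].
apply: filterS (open_nbhs_nbhs (conj oU Ux)) => y Uy Ay.
by have : (U `&` A) y by []; rewrite UA.
Qed.

Lemma near_isolated_outside (A H : set T) (x : T) :
  closed A -> (forall y, A y -> ~ H y -> isolated_in A y) -> ~ H x ->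
  \forall y \near x, A y -> y = x.
Proof.
move=> cA isoA nHx; have [Ax|nAx] := pselect (A x); first exact/near_isolated_in/isoA.
by apply: filterS (near_notin_closed cA nAx) => y nAy /nAy.
Qed.

Lemma CB_derivS_sub n : @CB_deriv T n.+1 `<=` CB_deriv n.
Proof. by move=> x []. Qed.

Lemma isolated_in_CB_deriv n x :
  CB_deriv n x -> ~ @CB_deriv T n.+1 x -> isolated_in (CB_deriv n) x.
Proof. by move=> Dx nD1x; apply: contrapT => nix; apply: nD1x. Qed.

Lemma closed_CB_deriv n : closed (@CB_deriv T n).
Proof.
elim: n => [|n IH]; first exact: closedT.
move=> x clx; apply: contrapT => nD1x.
have [Dx|nDx] := pselect (CB_deriv n x); last first.
  by have [y [[Dy _] nDy]] := clx _ (near_notin_closed IH nDx).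
have [y [D1y yx]] := clx _ (near_isolated_in (isolated_in_CB_deriv Dx nD1x)).
by apply: nD1x; rewrite -(yx (CB_derivS_sub D1y)).
Qed.

End CantorBendixson.

Section ExtensionOperators.
Variables (R : realType) (T : topologicalType).
Implicit Types (A B F H : set T) (f g : T -> R).

Lemma cont_onP A f :
  cont_on A f <-> (forall x, A x -> forall V, nbhs (f x) V ->
      \forall y \near x, A y -> V (f y)).
Proof. by rewrite /cont_on subspace_continuousP. Qed.

Lemma cont_on_subset A B f : A `<=` B -> cont_on B f -> cont_on A f.
Proof. by move=> AB; exact: continuous_subspaceW. Qed.

Lemma cont_on_scaleD A (a : R) f g :
  cont_on A f -> cont_on A g -> cont_on A (fun y => a * f y + g y).
Proof. by move=> cf cg x; apply: cvgD; [apply: cvgM; [exact: cvg_cst|exact: cf]|exact: cg]. Qed.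

Lemma extension_operator_bound_ge0 F A (E : (T -> R) -> T -> R) :
  extension_operator F A E -> exists2 M : R, 0 <= M &
    forall f, cont_on F f -> forall c : R, 0 <= c -> (forall y, F y -> `|f y| <= c) ->
    forall x, A x -> `|E f x| <= M * c.
Proof.
case=> _ _ _ [M HM] _; exists (Num.max M 0); first by rewrite le_max lexx orbT.
move=> f cf c c0 hc x Ax; apply: le_trans (HM f cf c c0 hc x Ax) _.
by rewrite ler_wpM2r // le_max lexx.
Qed.

Lemma has_extension_operator_refl A : has_extension_operator R A A.
Proof.
exists id; split => //; try by move=> f g _ _ e x; exact: e.
by exists 1 => f _ c _ hc x Ax; rewrite mul1r; exact: hc.
Qed.

Lemma has_extension_operator_trans F A B :
  F `<=` A -> has_extension_operator R F A -> has_extension_operator R A B ->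
  has_extension_operator R F B.
Proof.
move=> FA [E hE] [E' hE']; exists (E' \o E).
have [M M0 HM] := extension_operator_bound_ge0 hE.
have [M' _ HM'] := extension_operator_bound_ge0 hE'.
case: hE => wd cE lE _ rE; case: hE' => wd' cE' lE' _ rE'.
split => /=.
- move=> f g cf cg e x Bx; apply: wd' => //; [exact: cE|exact: cE|].
  by move=> y Ay; exact: wd.
- by move=> f cf; apply/cE'/cE.
- move=> a f g cf cg x Bx; rewrite -lE' //; [|exact: cE|exact: cE].
  apply: wd' => //; [exact/cE/cont_on_scaleD|exact/cont_on_scaleD/cE/cg/cE|].
  by move=> y Ay; exact: lE.
- exists (M' * M) => f cf c c0 hc x Bx; rewrite -mulrA.
  by apply: HM' => //; [exact: cE|exact: mulr_ge0|move=> y Ay; exact: HM].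
- by move=> f cf x Fx; rewrite rE' ?rE //; [exact: cE|exact: FA].
Qed.

Section Glue.
Variables (F A H : set T) (E : (T -> R) -> T -> R).
Hypotheses (cF : closed F) (cA : closed A) (HA : H `<=` A).
Hypothesis isoA : forall x, A x -> ~ H x -> isolated_in A x.
Hypothesis hE : extension_operator H A E.

Definition glue_ext g : T -> R := patch (E g) (F `|` H) g.

Lemma glue_ext_in g x : (F `|` H) x -> glue_ext g x = g x.
Proof. by move=> Gx; rewrite /glue_ext patchT // inE. Qed.

Lemma glue_ext_out g x : ~ (F `|` H) x -> glue_ext g x = E g x.
Proof. by move=> nGx; rewrite /glue_ext patchC // inE. Qed.

Lemma notin_glue_domain x : (F `|` A) x -> ~ (F `|` H) x -> A x.
Proof. by case=> // Fx []; left. Qed.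

Lemma cont_on_glue_ext g : cont_on (F `|` H) g -> cont_on (F `|` A) (glue_ext g).
Proof.
case: hE => _ cE _ _ rE cg; have cgH := cont_on_subset (@subsetUr _ F H) cg.
have /cont_onP cEg := cE g cgH; move/cont_onP: cg => cg.
apply/cont_onP => x FAx V; have [Gx|nGx] := pselect ((F `|` H) x); last first.
  have nFx : ~ F x by move=> Fx; apply: nGx; left.
  have nHx : ~ H x by move=> Hx; apply: nGx; right.
  rewrite glue_ext_out // => nV.
  apply: filterS2 (near_notin_closed cF nFx) (near_isolated_outside cA isoA nHx).
  move=> y nFy yx [//|/yx ->].
  by rewrite glue_ext_out //; exact: nbhs_singleton.
rewrite glue_ext_in // => nV; have nearG := cg x Gx V nV.
have [Hx|nHx] := pselect (H x).
  have nearA : \forall y \near x, A y -> V (E g y).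
    by apply: cEg; [exact: HA|rewrite rE].
  apply: filterS2 nearG nearA => y Gg Ae FAy.
  have [Gy|nGy] := pselect ((F `|` H) y); first by rewrite glue_ext_in //; exact: Gg.
  by rewrite glue_ext_out //; apply/Ae/notin_glue_domain.
apply: filterS2 nearG (near_isolated_outside cA isoA nHx) => y Gg yx FAy.
have [Gy|nGy] := pselect ((F `|` H) y); first by rewrite glue_ext_in //; exact: Gg.
by have exy := yx (notin_glue_domain FAy nGy); case: nGy; rewrite exy.
Qed.

Lemma extension_operator_glue_ext : extension_operator (F `|` H) (F `|` A) glue_ext.
Proof.
have hE' := hE; case: hE' => wd _ lE [M HM] _.
have cH f : cont_on (F `|` H) f -> cont_on H f := cont_on_subset (@subsetUr _ F H).
split.
- move=> f g cf cg e x FAx; have [Gx|nGx] := pselect ((F `|` H) x).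
    by rewrite !glue_ext_in //; exact: e.
  rewrite !glue_ext_out //; apply: wd; [exact: cH|exact: cH| |exact: notin_glue_domain].
  by move=> y Hy; apply: e; right.
- exact: cont_on_glue_ext.
- move=> a f g cf cg x FAx; have [Gx|nGx] := pselect ((F `|` H) x).
    by rewrite !glue_ext_in.
  by rewrite !glue_ext_out // lE //; [exact: cH|exact: cH|exact: notin_glue_domain].
- exists (Num.max M 1) => f cf c c0 hc x FAx.
  have [Gx|nGx] := pselect ((F `|` H) x).
    rewrite glue_ext_in //; apply: le_trans (hc x Gx) _.
    by rewrite -[leLHS]mul1r ler_wpM2r // le_max lexx orbT.
  rewrite glue_ext_out //; apply: le_trans (HM f (cH f cf) c c0 _ x _) _.
  + by move=> y Hy; apply: hc; right.
  + exact: notin_glue_domain.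
  + by rewrite ler_wpM2r // le_max lexx.
- by move=> f cf x Gx; rewrite glue_ext_in.
Qed.

End Glue.

Lemma has_extension_operator_glue F A H :
  closed F -> closed A -> H `<=` A -> (forall x, A x -> ~ H x -> isolated_in A x) ->
  has_extension_operator R H A -> has_extension_operator R (F `|` H) (F `|` A).
Proof. by move=> cF cA HA isoA [E hE]; exists (glue_ext F H E); exact: extension_operator_glue_ext. Qed.

Lemma has_extension_operator_CB_deriv F :
  closed F ->
  (forall n, has_extension_operator R (@CB_deriv T n.+1) (CB_deriv n)) ->
  forall n, has_extension_operator R (F `|` CB_deriv n) [set: T].
Proof.
move=> cF hE; elim=> [|n IH]; first by rewrite /= setUT; exact: has_extension_operator_refl.
apply: has_extension_operator_trans IH; first exact/setUS/CB_derivS_sub.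
apply: has_extension_operator_glue => //; first exact: closed_CB_deriv.
- exact: CB_derivS_sub.
- exact: isolated_in_CB_deriv.
Qed.

End ExtensionOperators.

Theorem corollary3p11 (R : realType) (K : topologicalType) :
  hausdorff_space K -> compact [set: K] -> scattered K -> finite_height K ->
  (forall n : nat, has_extension_operator R (@CB_deriv K n.+1) (@CB_deriv K n)) ->
  extension_property R K.
Proof.
move=> _ _ _ [h Dh] hE F cF _.
by have := has_extension_operator_CB_deriv cF hE h; rewrite Dh setU0.
Qed.
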